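(* Let $p$ be a prime, $d\geq4$ even, $n\geq2$, $q=p^f$ with $f\in\{1,2,\ldots\}\cup\{\infty\}$ (convention $p^\infty=0$, $f\geq2$ if $p=2$), and let $G=\langle x_1,\ldots,x_d\mid r_0\rangle$ be a one-relator pro-$p$ group (minimal presentation) with $r_0=x_1^q[x_1,{}_n\,x_2][x_3,x_4][x_5,x_6]\cdots[x_{d-1},x_d]\cdot s$, where $s\in S''$ and $S$ is the closed subgroup generated by $x_3,\ldots,x_d$. Then every defined $3$-fold Massey product in $H^\bullet(G,\mathbb{F}_p)$ vanishes if and only if $q\neq3$ and $n\geq3$.
   Context: Commutators $[x,y]=x^{-1}y^{-1}xy$, $[y,{}_k x]$ left-normed; $H''$ is the closed commutator subgroup of $H'$. For $\psi_1,\ldots,\psi_m\in H^1(G,\mathbb{F}_p)=\mathrm{Hom}(G,\mathbb{F}_p)$, $\langle\psi_1,\ldots,\psi_m\rangle\subseteq H^2(G,\mathbb{F}_p)$ is the standard $m$-fold Massey product; defined if nonempty, vanishing if it contains $0$. Equivalently, with $\mathbb{U}_{m+1}$ the upper unitriangular $(m+1)\times(m+1)$ matrices over $\mathbb{F}_p$ and $Z$ its center: defined iff there is a continuous homomorphism $G\to\mathbb{U}_{m+1}/Z$ with $(i,i+1)$-entries $\psi_i$, vanishing iff there is a continuous homomorphism $G\to\mathbb{U}_{m+1}$ with $(i,i+1)$-entries $\psi_i$. *)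

From mathcomp Require Import all_boot all_fingroup all_algebra all_solvable.

Set Implicit Arguments.
Unset Strict Implicit.
Unset Printing Implicit Defensive.

Local Open Scope group_scope.

(* Elements of the free pro-p group on d generators x_0, ..., x_{d-1}.      *)
(* An element w of the free pro-p group F is the same thing as a natural    *)
(* "word map": for every finite p-group P and every d-tuple g of elements   *)
(* of P (i.e. every continuous homomorphism F -> P, x_i |-> g i) it gives   *)
(* the image of w, naturally in P.  We model finite p-groups as the         *)
(* subgroups <<g>> of finGroupTypes that happen to be p-groups.             *)

Definition gens (gT : finGroupType) (d : nat) (g : 'I_d -> gT) : {set gT} :=
  <<[set g i | i : 'I_d]>>.

Record ppword (p d : nat) := PPWord {
  pw_eval : forall gT : finGroupType, ('I_d -> gT) -> gT;
  pw_in : forall (gT : finGroupType) (g : 'I_d -> gT),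
    p.-group (gens g) -> pw_eval g \in gens g;
  pw_nat : forall (gT hT : finGroupType) (D : {group gT})
      (phi : {morphism D >-> hT}) (g : 'I_d -> gT),
    p.-group (gens g) -> (forall i, g i \in D) ->
    pw_eval (fun i => phi (g i)) = phi (pw_eval g)
}.

(* generator x_{k} (0-based), 1 if k is out of range *)
Definition gat (gT : finGroupType) (d : nat) (g : 'I_d -> gT) (k : nat) : gT :=
  if insub k is Some i then g i else 1.

(* The subgroup S generated by x_3, ..., x_d (0-based indices 2 .. d-1) *)
Definition gensS (gT : finGroupType) (d : nat) (g : 'I_d -> gT) : {set gT} :=
  <<[set g i | i : 'I_d & 2 <= val i]>>.

(* s lies in S'' (closed second derived subgroup of S): equivalently its   *)
(* image under every homomorphism to a finite p-group lies in the second   *)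
(* derived subgroup of the image of S.                                     *)
Definition in_S2 (p d : nat) (s : ppword p d) : Prop :=
  forall (gT : finGroupType) (g : 'I_d -> gT),
    p.-group (gens g) -> pw_eval s g \in (gensS g)^`(2).

(* q = p^f, with f = None standing for f = infinity and p^infinity = 0 *)
Definition qval (p : nat) (f : option nat) : nat :=
  match f with Some k => p ^ k | None => 0 end.

Definition comm_iter (gT : finGroupType) (y x : gT) (n : nat) : gT :=
  iter n (fun z => [~ z, x]) y.

(* Evaluation of the relator
   r0 = x_1^q [x_1, _n x_2] [x_3,x_4][x_5,x_6]...[x_{d-1},x_d] * s
   at a tuple g (1-based x_i = g (i-1)). *)
Definition relator (p d n : nat) (f : option nat) (s : ppword p d)
    (gT : finGroupType) (g : 'I_d -> gT) : gT :=
  (gat g 0) ^+ (qval p f) * comm_iter (gat g 0) (gat g 1) n *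
  (\prod_(k < d./2 - 1) [~ gat g (2 * k + 2), gat g (2 * k + 3)]) *
  pw_eval s g.

(* Continuous homomorphisms G = <x_1..x_d | r0> -> H, for H a finite       *)
(* p-subgroup (given as a set H of a finGroupType), are the tuples of       *)
(* elements of H (images of the generators) killing the relator.            *)
Definition hom_tuple (p d n : nat) (f : option nat) (s : ppword p d)
    (gT : finGroupType) (H : {set gT}) (g : 'I_d -> gT) : Prop :=
  (forall j, g j \in H) /\ relator n f s g = 1.

Definition unitri (p : nat) (M : 'M['F_p]_4) : bool :=
  [forall i : 'I_4, forall j : 'I_4,
     ((j < i)%N ==> (M i j == 0%R)) && ((i == j) ==> (M i j == 1%R))].

Definition U4 (p : nat) : {set {'GL_4['F_p]}} :=
  [set A : {'GL_4['F_p]} | unitri (GLval A)].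

Definition Z4 (p : nat) : {set {'GL_4['F_p]}} :=
  [set A : {'GL_4['F_p]} | unitri (GLval A) &&
     [forall i : 'I_4, forall j : 'I_4,
        ((i < j)%N && ~~ ((val i == 0%N) && (val j == 3%N))) ==>
        (GLval A i j == 0%R)]].

(* (i, i+1) entry of a matrix, i : 'I_3 standing for the 1-based index i+1 *)
Definition supd (p : nat) (M : 'M['F_p]_4) (i : 'I_3) : 'F_p :=
  M (widen_ord (isT : (3 <= 4)%N) i) (lift ord0 i).

(* Triple Massey products via the unipotent characterisation.               *)
(* psi i : 'I_d -> 'F_p is the element psi_{i+1} of H^1(G,F_p) =           *)
(* Hom(G,F_p), given by its values on the generators; it is a homomorphism  *)
(* iff it kills the relator (F_p viewed as its additive finite group).      *)

Definition massey3_defined (p d n : nat) (f : option nat) (s : ppword p d)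
    (psi : 'I_3 -> 'I_d -> 'F_p) : Prop :=
  exists rho : 'I_d -> coset_of (Z4 p),
    hom_tuple n f s (U4 p / Z4 p) rho /\
    forall j, exists A : {'GL_4['F_p]},
      [/\ A \in U4 p, coset (Z4 p) A = rho j &
          forall i, supd (GLval A) i = psi i j].

Definition massey3_vanishes (p d n : nat) (f : option nat) (s : ppword p d)
    (psi : 'I_3 -> 'I_d -> 'F_p) : Prop :=
  exists sigma : 'I_d -> {'GL_4['F_p]},
    hom_tuple n f s (U4 p) sigma /\
    forall j i, supd (GLval (sigma j)) i = psi i j.

Definition all_defined_massey3_vanish (p d n : nat) (f : option nat)
    (s : ppword p d) : Prop :=
  forall psi : 'I_3 -> 'I_d -> 'F_p,
    (forall i, hom_tuple n f s [set: 'F_p] (psi i)) ->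
    massey3_defined n f s psi -> massey3_vanishes n f s psi.

(* A triple Massey product <psi1, psi2, psi3> is defined iff some lift of the
   generators to U_4 with superdiagonals (psi_i(x_j)) maps r0 into the centre
   Z_4 = 1 + F_p E_14, and vanishes iff some such lift maps r0 to 1.  U_4 is
   metabelian of class 3, and since (1 + N)^(p^k) = 1 + N^(p^k) and N^4 = 0 its
   exponent divides every p^k >= 4.  So on a lift s dies, x_1^q dies when q <> 3,
   [x_1, _n x_2] dies when n >= 3, and r0 maps to the product of the commutators
   [x_(2k+1), x_(2k+2)], 1 <= k < d/2.  If some x_j, j >= 3, has a nonzero (1,2)
   or (3,4) entry, multiplying the lift of its partner by an element of
   V_4 = [U_4, U_4] multiplies their commutator by an arbitrary central element,
   which cancels the central value of r0; otherwise these lifts commute pairwise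
   and r0 already maps to 1.  Conversely, if q = 3 every lift of
   (chi_1, chi_1, chi_1) maps r0 to x_1^3 = 1 + E_14, and if n = 2 every lift of
   (chi_1, chi_2, chi_2) maps r0 to [x_1, x_2, x_2] = 1 + E_14: these products
   are defined but do not vanish. *)

From mathcomp Require Import all_boot all_fingroup all_algebra all_solvable.
From mathcomp Require Import ring zify.
From Stdlib Require Import FunctionalExtensionality.

Set Implicit Arguments.
Unset Strict Implicit.
Unset Printing Implicit Defensive.

Import GRing.Theory.

Lemma exp1Dn_pchar (R : nzRingType) p (x : R) k : (p \in [pchar R])%R ->
  ((1 + x) ^+ (p ^ k) = 1 + x ^+ (p ^ k))%R.
Proof.
move=> pcharRp; elim: k => [|k IHk]; first by rewrite !expr1.
rewrite expnSr !exprM IHk -!(pFrobenius_autE pcharRp) pFrobenius_autD_comm.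
  by rewrite pFrobenius_aut1.
exact/commr_sym/commr1.
Qed.

Lemma pair_index j d : ~~ odd d -> (2 <= j)%N -> (j < d)%N ->
  [/\ j./2 - 1 < d./2 - 1, 2 * (j./2 - 1) + 3 < d &
      j = if odd j then 2 * (j./2 - 1) + 3 else 2 * (j./2 - 1) + 2]%N.
Proof. by move=> *; split; [lia | lia | case: ifP; lia]. Qed.

Lemma prod_central_factor (gT : finGroupType) m (F : 'I_m -> gT) (k0 : 'I_m) z :
  (forall k, commute z (F k)) ->
  (\prod_(k < m) (if k == k0 then z * F k else F k) = z * \prod_(k < m) F k)%g.
Proof.
move=> czF; rewrite (eq_bigr (fun k => (if k == k0 then z else 1) * F k)%g); last first.
  by move=> k _; case: eqP; rewrite ?mul1g.
rewrite prodgM_commute => [|i j _ _]; last first.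
  by case: eqP => _; [exact: czF | exact/commute_sym/commute1].
by rewrite -big_mkcond big_pred1_eq.
Qed.

(** * The unitriangular group U_4 *)

Section Unitriangular.
Variable p : nat.
Local Notation F := 'F_p.
(* Elements are typed through the canonical finGroupType structure: with the
   bare type {'GL_4[F]}, unifying generic fingroup lemmas with its monoid-level
   instances is prohibitively slow. *)
Local Notation GL4 := (FinGroup.sort (FinGroup.clone {'GL_4[F]} _)).
Local Notation i0 := (@Ordinal 3 0 isT).
Local Notation i1 := (@Ordinal 3 1 isT).
Local Notation i2 := (@Ordinal 3 2 isT).
Local Open Scope ring_scope.

(* Parameters are named by 1-based position: a_ij sits at 0-based (i-1, j-1). *)
Definition nilmx (a12 a23 a34 a13 a24 a14 : F) : 'M[F]_4 :=
  \matrix_(i < 4, j < 4)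
    match val i, val j with
    | 0, 1 => a12 | 1, 2 => a23 | 2, 3 => a34
    | 0, 2 => a13 | 1, 3 => a24 | 0, 3 => a14 | _, _ => 0
    end.
#[global] Arguments nilmx (a12 a23 a34 a13 a24 a14)%_R.

Lemma nilmxD a12 a23 a34 a13 a24 a14 b12 b23 b34 b13 b24 b14 :
  nilmx a12 a23 a34 a13 a24 a14 + nilmx b12 b23 b34 b13 b24 b14 =
  nilmx (a12 + b12) (a23 + b23) (a34 + b34) (a13 + b13) (a24 + b24) (a14 + b14).
Proof.
apply/matrixP => i j; rewrite !mxE.
by case: i => [[|[|[|[|i]]]] ?] //; case: j => [[|[|[|[|j]]]] ?] //; rewrite addr0.
Qed.

Lemma nilmxM a12 a23 a34 a13 a24 a14 b12 b23 b34 b13 b24 b14 :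
  nilmx a12 a23 a34 a13 a24 a14 *m nilmx b12 b23 b34 b13 b24 b14 =
  nilmx 0 0 0 (a12 * b23) (a23 * b34) (a12 * b24 + a13 * b34).
Proof.
apply/matrixP => i j; rewrite !mxE !big_ord_recl big_ord0 !mxE /=.
by case: i => [[|[|[|[|i]]]] ?] //; case: j => [[|[|[|[|j]]]] ?] // => /=; ring.
Qed.

Lemma nilmx0 : nilmx 0 0 0 0 0 0 = 0.
Proof.
apply/matrixP => i j; rewrite !mxE.
by case: i => [[|[|[|[|i]]]] ?] //; case: j => [[|[|[|[|j]]]] ?].
Qed.

Lemma nilmx_exp3 a12 a23 a34 a13 a24 a14 :
  nilmx a12 a23 a34 a13 a24 a14 ^+ 3 = nilmx 0 0 0 0 0 (a12 * a23 * a34).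
Proof. by rewrite !exprS expr0 mulr1 -!mulmxE !nilmxM; congr nilmx; ring. Qed.

Lemma nilmx_exp4 a12 a23 a34 a13 a24 a14 : nilmx a12 a23 a34 a13 a24 a14 ^+ 4 = 0.
Proof. by rewrite exprS nilmx_exp3 -mulmxE nilmxM -nilmx0; congr nilmx; ring. Qed.

Lemma unip_mulmx a12 a23 a34 a13 a24 a14 b12 b23 b34 b13 b24 b14 :
  (1 + nilmx a12 a23 a34 a13 a24 a14) *m (1 + nilmx b12 b23 b34 b13 b24 b14) =
  1 + nilmx (a12 + b12) (a23 + b23) (a34 + b34) (a13 + a12 * b23 + b13)
            (a24 + a23 * b34 + b24) (a14 + a12 * b24 + a13 * b34 + b14).
Proof.
rewrite mulmxDl !mulmxDr !mul1mx mulmx1 nilmxM -addrA; congr (_ + _).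
rewrite addrC -addrA nilmxD addrC nilmxD; congr nilmx; ring.
Qed.

Lemma unip_unitmx a12 a23 a34 a13 a24 a14 :
  1 + nilmx a12 a23 a34 a13 a24 a14 \in unitmx.
Proof.
pose inv := 1 + nilmx (- a12) (- a23) (- a34) (a12 * a23 - a13) (a23 * a34 - a24)
  (a12 * a24 + a34 * a13 - a14 - a12 * a23 * a34).
have inv_r : (1 + nilmx a12 a23 a34 a13 a24 a14) *m inv = 1%:M.
  by rewrite unip_mulmx -[RHS]addr0 -nilmx0; congr (_ + nilmx _ _ _ _ _ _); ring.
exact: (mulmx1_unit inv_r).1.
Qed.

Definition unip a12 a23 a34 a13 a24 a14 : GL4 :=
  FinRing.Unit (unip_unitmx a12 a23 a34 a13 a24 a14).
(* Keeps numerals field elements under group_scope, where 1 would denote the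
   additive identity of 'F_p. *)
#[global] Arguments unip (a12 a23 a34 a13 a24 a14)%_R.

Local Open Scope group_scope.

Lemma GL4_inj (x y : GL4) : GLval x = GLval y -> x = y.
Proof. exact: val_inj. Qed.

Lemma unip_mul a12 a23 a34 a13 a24 a14 b12 b23 b34 b13 b24 b14 :
  unip a12 a23 a34 a13 a24 a14 * unip b12 b23 b34 b13 b24 b14 =
  unip (a12 + b12) (a23 + b23) (a34 + b34) (a13 + a12 * b23 + b13)
       (a24 + a23 * b34 + b24) (a14 + a12 * b24 + a13 * b34 + b14).
Proof. by apply: GL4_inj; rewrite GL_MxE /= unip_mulmx. Qed.

Lemma unip1 : unip 0 0 0 0 0 0 = 1.
Proof. by apply: GL4_inj; rewrite GL_1E /= nilmx0 addr0. Qed.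

Lemma unipV a12 a23 a34 a13 a24 a14 :
  (unip a12 a23 a34 a13 a24 a14)^-1 =
  unip (- a12) (- a23) (- a34) (a12 * a23 - a13) (a23 * a34 - a24)
       (a12 * a24 + a34 * a13 - a14 - a12 * a23 * a34).
Proof.
apply: (mulgI (unip a12 a23 a34 a13 a24 a14)).
by rewrite mulgV unip_mul -unip1; congr unip; ring.
Qed.

Lemma unip_comm a12 a23 a34 a13 a24 a14 b12 b23 b34 b13 b24 b14 :
  [~ unip a12 a23 a34 a13 a24 a14, unip b12 b23 b34 b13 b24 b14] =
  unip 0 0 0 (a12 * b23 - a23 * b12) (a23 * b34 - a34 * b23)
    (a12 * b24 - a24 * b12 + a13 * b34 - a34 * b13
     + a12 * a34 * b23 - a12 * a23 * b34 + a34 * b12 * b23 - a23 * b12 * b34).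
Proof. by rewrite /commg /conjg !unipV !unip_mul; congr unip; ring. Qed.

Lemma unip_inj a12 a23 a34 a13 a24 a14 b12 b23 b34 b13 b24 b14 :
  unip a12 a23 a34 a13 a24 a14 = unip b12 b23 b34 b13 b24 b14 ->
  [/\ a12 = b12, a23 = b23, a34 = b34, a13 = b13 & a24 = b24 /\ a14 = b14].
Proof.
move/(congr1 (fun x : GL4 => GLval x)) => /= /addrI E.
have Eij i j (hi : (i < 4)%N) (hj : (j < 4)%N) :=
  congr1 (fun M : 'M[F]_4 => M (Ordinal hi) (Ordinal hj)) E.
move: (Eij 0%N 1%N isT isT) (Eij 1%N 2%N isT isT) (Eij 2%N 3%N isT isT).
move: (Eij 0%N 2%N isT isT) (Eij 1%N 3%N isT isT) (Eij 0%N 3%N isT isT).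
by rewrite !mxE /= => -> -> -> -> -> ->.
Qed.


Variant U4_spec (x : GL4) : Prop :=
  U4Spec a12 a23 a34 a13 a24 a14 of x = unip a12 a23 a34 a13 a24 a14.

Lemma unip_U4 a12 a23 a34 a13 a24 a14 : unip a12 a23 a34 a13 a24 a14 \in U4 p.
Proof.
rewrite inE; apply/forallP => i; apply/forallP => j; rewrite !mxE.
by case: i => [[|[|[|[|i]]]] ?] //; case: j => [[|[|[|[|j]]]] ?].
Qed.

Lemma U4P (x : GL4) : x \in U4 p -> U4_spec x.
Proof.
rewrite inE => /forallP unitri_x.
pose e i j (hi : (i < 4)%N) (hj : (j < 4)%N) := GLval x (Ordinal hi) (Ordinal hj).
exists (e 0 1 isT isT)%N (e 1 2 isT isT)%N (e 2 3 isT isT)%N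
       (e 0 2 isT isT)%N (e 1 3 isT isT)%N (e 0 3 isT isT)%N.
apply: GL4_inj; apply/matrixP => i j.
have /forallP/(_ j)/andP[/implyP lower /implyP diag] := unitri_x i.
rewrite /= !mxE /e; case: i lower diag => [[|[|[|[|i]]]] hi] //;
  case: j => [[|[|[|[|j]]]] hj] //= lower diag;
  first [ by rewrite addr0; apply/eqP/diag | by rewrite addr0; apply/eqP/lower
        | by rewrite add0r (bool_irrelevance hi isT) (bool_irrelevance hj isT) ].
Qed.

Lemma supd_unip a12 a23 a34 a13 a24 a14 (i : 'I_3) :
  supd (GLval (unip a12 a23 a34 a13 a24 a14)) i = [:: a12; a23; a34]`_i.
Proof. by case: i => [[|[|[|i]]] ?] //; rewrite /supd /= !mxE /= add0r. Qed.

Definition V4 : {set GL4} := [set x in U4 p | [forall i, supd (GLval x) i == 0%R]].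

Lemma V4P (x : GL4) :
  reflect (exists a13 a24 a14, x = unip 0 0 0 a13 a24 a14) (x \in V4).
Proof.
apply: (iffP setIdP) => [[/U4P[a12 a23 a34 a13 a24 a14 ->] /forallP supd0] | ].
  exists a13, a24, a14; move: (supd0 i0) (supd0 i1) (supd0 i2).
  by rewrite !supd_unip /= => /eqP-> /eqP-> /eqP->.
case=> a13 [a24 [a14 ->]]; split; first exact: unip_U4.
by apply/forallP => i; rewrite supd_unip; case: i => [[|[|[|i]]] ?].
Qed.

Lemma Z4P (x : GL4) : reflect (exists a14, x = unip 0 0 0 0 0 a14) (x \in Z4 p).
Proof.
apply: (iffP idP) => [|[a14 ->]].
  move=> Zx; have /U4P[a12 a23 a34 a13 a24 a14 Ex] : x \in U4 p.
    by move: Zx; rewrite !inE => /andP[].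
  move: Zx; rewrite Ex inE => /andP[_ /forallP off].
  have e i j (hi : (i < 4)%N) (hj : (j < 4)%N) :
      (i < j)%N -> ~~ ((i == 0) && (j == 3))%N ->
      GLval (unip a12 a23 a34 a13 a24 a14) (Ordinal hi) (Ordinal hj) = 0%R.
    move=> ij not03; apply/eqP.
    by move/forallP/(_ (Ordinal hj))/implyP: (off (Ordinal hi)); apply; rewrite ij.
  move: (e 0 1 isT isT isT isT)%N (e 1 2 isT isT isT isT)%N (e 2 3 isT isT isT isT)%N.
  move: (e 0 2 isT isT isT isT)%N (e 1 3 isT isT isT isT)%N.
  by rewrite !mxE /= !add0r => -> -> -> -> ->; exists a14.
have := unip_U4 0 0 0 0 0 a14; rewrite !inE => -> /=.
apply/forallP => i; apply/forallP => j; apply/implyP; rewrite !mxE.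
by case: i => [[|[|[|[|i]]]] ?] //; case: j => [[|[|[|[|j]]]] ?]; rewrite ?add0r.
Qed.

Lemma U4_group_set : group_set (U4 p).
Proof.
apply/andP; split; first by rewrite -unip1 unip_U4.
apply/subsetP => z /mulsgP[x y /U4P[a12 a23 a34 a13 a24 a14 ->]].
by move=> /U4P[b12 b23 b34 b13 b24 b14 ->] ->; rewrite unip_mul unip_U4.
Qed.
Canonical U4_group := Group U4_group_set.

Lemma V4_group_set : group_set V4.
Proof.
apply/andP; split; first by apply/V4P; exists 0%R, 0%R, 0%R; rewrite unip1.
apply/subsetP => z /mulsgP[x y /V4P[a13 [a24 [a14 ->]]] /V4P[b13 [b24 [b14 ->]]] ->].
by apply/V4P; rewrite unip_mul; do 3 eexists; congr unip; rewrite ?mul0r ?addr0.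
Qed.
Canonical V4_group := Group V4_group_set.

Lemma Z4_group_set : group_set (Z4 p).
Proof.
apply/andP; split; first by apply/Z4P; exists 0%R; rewrite unip1.
apply/subsetP => z /mulsgP[x y /Z4P[a14 ->] /Z4P[b14 ->] ->].
by apply/Z4P; rewrite unip_mul; eexists; congr unip; rewrite ?mul0r ?addr0.
Qed.
Canonical Z4_group := Group Z4_group_set.

Lemma V4_sub_U4 : V4 \subset U4 p.
Proof. by apply/subsetP => x /setIdP[]. Qed.

Lemma Z4_central : Z4 p \subset 'C(U4 p).
Proof.
apply/centsP => _ /Z4P[c ->] _ /U4P[a12 a23 a34 a13 a24 a14 ->].
by rewrite /commute !unip_mul; congr unip; ring.
Qed.

Lemma U4_norm_Z4 : U4 p \subset 'N(Z4 p).
Proof. by rewrite cents_norm // centsC Z4_central. Qed.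

Lemma unip_commute a23 a13 a24 a14 b23 b13 b24 b14 :
  commute (unip 0 a23 0 a13 a24 a14) (unip 0 b23 0 b13 b24 b14).
Proof. by rewrite /commute !unip_mul; congr unip; ring. Qed.

Lemma V4_abelian : abelian V4.
Proof.
apply/centsP => _ /V4P[a13 [a24 [a14 ->]]] _ /V4P[b13 [b24 [b14 ->]]].
exact: unip_commute.
Qed.

Lemma commg_U4_V4 (x y : GL4) : x \in U4 p -> y \in U4 p -> [~ x, y] \in V4.
Proof.
case/U4P=> a12 a23 a34 a13 a24 a14 -> /U4P[b12 b23 b34 b13 b24 b14 ->].
by apply/V4P; rewrite unip_comm; do 3 eexists.
Qed.

Lemma commg_unip_V4 a12 a23 a34 a13 a24 a14 b13 b24 b14 :
  [~ unip a12 a23 a34 a13 a24 a14, unip 0 0 0 b13 b24 b14] =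
  unip 0 0 0 0 0 (a12 * b24 - a34 * b13).
Proof. by rewrite unip_comm; congr unip; ring. Qed.

Lemma commg_V4_Z4 (x w : GL4) : x \in U4 p -> w \in V4 -> [~ x, w] \in Z4 p.
Proof.
case/U4P=> a12 a23 a34 a13 a24 a14 -> /V4P[b13 [b24 [b14 ->]]].
by apply/Z4P; rewrite commg_unip_V4; eexists.
Qed.

Lemma commg_onto_Z4 a12 a23 a34 a13 a24 a14 (z : GL4) :
  (a12 != 0%R) || (a34 != 0%R) -> z \in Z4 p ->
  exists2 w, w \in V4 & [~ unip a12 a23 a34 a13 a24 a14, w] = z.
Proof.
move=> nz /Z4P[c ->]; have [a12_0 | a12_nz] := eqVneq a12 0%R.
  rewrite a12_0 eqxx /= in nz.
  exists (unip 0 0 0 (- c / a34) 0 0); first by apply/V4P; do 3 eexists.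
  by rewrite commg_unip_V4 a12_0; congr unip; field.
exists (unip 0 0 0 0 (c / a12) 0); first by apply/V4P; do 3 eexists.
by rewrite commg_unip_V4; congr unip; field.
Qed.

Lemma Z4_commute (z x : GL4) : z \in Z4 p -> x \in U4 p -> commute z x.
Proof. by move=> Zz; apply/centP/(subsetP Z4_central). Qed.

Lemma commgMV4r (x y w : GL4) : x \in U4 p -> y \in U4 p -> w \in V4 ->
  [~ x, y * w] = [~ x, w] * [~ x, y].
Proof.
move=> Ux Uy Vw; rewrite commgMJ; congr (_ * _); apply/conjg_fixP/commgP.
exact: (centsP V4_abelian) (commg_U4_V4 Ux Uy) w Vw.
Qed.

Lemma commgMV4l (x y w : GL4) : x \in U4 p -> y \in U4 p -> w \in V4 ->
  [~ x * w, y] = [~ w, y] * [~ x, y].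
Proof.
move=> Ux Uy Vw; have Uw := subsetP V4_sub_U4 w Vw.
rewrite commMgJ; have /conjg_fixP-> : [~ [~ x, y], w] == 1.
  by apply/commgP; apply: (centsP V4_abelian); rewrite ?commg_U4_V4.
apply/esym/Z4_commute; last by rewrite groupR.
by rewrite -invgR groupV commg_V4_Z4.
Qed.

Lemma der2_U4 : (U4 p)^`(2) = 1.
Proof.
have der1_V4 : (U4 p)^`(1) \subset V4.
  rewrite derg1 gen_subG; apply/subsetP => _ /imset2P[x y Ux Uy ->].
  exact: commg_U4_V4.
rewrite dergSn; apply/trivgP; apply: subset_trans (commgSS der1_V4 der1_V4) _.
by rewrite subG1; apply/eqP/commG1P/V4_abelian.
Qed.


Hypothesis p_pr : prime p.

Lemma unip_expp a12 a23 a34 a13 a24 a14 k :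
  GLval (unip a12 a23 a34 a13 a24 a14 ^+ (p ^ k)) =
  (1 + nilmx a12 a23 a34 a13 a24 a14 ^+ (p ^ k))%R.
Proof.
have pchar_p := rmorph_pchar (@scalar_mx F 4) (pchar_Fp p_pr).
by rewrite FinRing.val_unitX exp1Dn_pchar.
Qed.

Lemma U4_expn (x : GL4) k : x \in U4 p -> (4 <= p ^ k)%N -> x ^+ (p ^ k) = 1.
Proof.
case/U4P=> a12 a23 a34 a13 a24 a14 -> le4pk; apply: GL4_inj.
by rewrite unip_expp GL_1E -(subnKC le4pk) exprD nilmx_exp4 mul0r addr0.
Qed.

Lemma unip_exp3 a12 a23 a34 a13 a24 a14 : p = 3%N ->
  unip a12 a23 a34 a13 a24 a14 ^+ 3 = unip 0 0 0 0 0 (a12 * a23 * a34).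
Proof.
move=> p3; have p1_3 : (p ^ 1 = 3)%N by rewrite p3.
by apply: GL4_inj; rewrite -[X in _ ^+ X]p1_3 unip_expp p1_3 nilmx_exp3.
Qed.

Lemma U4_pgroup : p.-group (U4 p).
Proof.
apply/pgroupP => r r_pr /(Cauchy r_pr)[x Ux ox].
have : (#[x] %| p ^ 2)%N.
  by rewrite order_dvdn U4_expn // (leq_mul (prime_gt1 p_pr) (prime_gt1 p_pr)).
by rewrite ox Euclid_dvdX // andbT dvdn_prime2 // => /eqP.
Qed.

End Unitriangular.

(** * Evaluating the relator *)

Section Relator.
Variables (p d n : nat) (f : option nat) (s : ppword p d).
Local Notation F := 'F_p.
Local Notation GL4 := (FinGroup.sort (FinGroup.clone {'GL_4[F]} _)).
Local Notation i0 := (@Ordinal 3 0 isT).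
Local Notation i1 := (@Ordinal 3 1 isT).
Local Notation i2 := (@Ordinal 3 2 isT).
Local Open Scope group_scope.

Lemma gat_ord (gT : finGroupType) (g : 'I_d -> gT) (j : 'I_d) : gat g j = g j.
Proof. by rewrite /gat valK. Qed.

Lemma gat_lt (gT : finGroupType) (g : 'I_d -> gT) k (lt_kd : (k < d)%N) :
  gat g k = g (Ordinal lt_kd).
Proof. exact: gat_ord (Ordinal lt_kd). Qed.

Lemma gat_out (gT : finGroupType) (g : 'I_d -> gT) k : (d <= k)%N -> gat g k = 1.
Proof. by move=> le_dk; rewrite /gat insubF // ltnNge le_dk. Qed.

Lemma gat_in (gT : finGroupType) (H : {group gT}) (g : 'I_d -> gT) k :
  (forall j, g j \in H) -> gat g k \in H.
Proof. by rewrite /gat; case: insub => [j|] gH; rewrite ?group1 ?gH. Qed.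

Lemma gens_sub (gT : finGroupType) (H : {group gT}) (g : 'I_d -> gT) :
  (forall j, g j \in H) -> gens g \subset H.
Proof. by move=> gH; rewrite gen_subG; apply/subsetP => _ /imsetP[j _ ->]. Qed.

Lemma comm_iterS (gT : finGroupType) (x y : gT) m :
  comm_iter x y m.+1 = [~ comm_iter x y m, y].
Proof. by []. Qed.

Lemma comm_iter_in (gT : finGroupType) (H : {group gT}) (x y : gT) m :
  x \in H -> y \in H -> comm_iter x y m \in H.
Proof. by move=> Hx Hy; elim: m => [|m IHm] //; rewrite comm_iterS groupR. Qed.

Lemma comm_iter_morph (gT hT : finGroupType) (D : {group gT})
    (phi : {morphism D >-> hT}) (x y : gT) m :
  x \in D -> y \in D -> comm_iter (phi x) (phi y) m = phi (comm_iter x y m).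
Proof.
by move=> Dx Dy; elim: m => [|m IHm] //; rewrite !comm_iterS IHm morphR ?comm_iter_in.
Qed.

(* The factor k is [x_(2k+3), x_(2k+4)] in the 1-based notation of r0. *)
Definition pair_comms (gT : finGroupType) (g : 'I_d -> gT) : gT :=
  \prod_(k < d./2 - 1) [~ gat g (2 * k + 2), gat g (2 * k + 3)].

Lemma pair_comms_in (gT : finGroupType) (H : {group gT}) (g : 'I_d -> gT) :
  (forall j, g j \in H) -> pair_comms g \in H.
Proof. by move=> gH; apply: group_prod => k _; rewrite groupR ?gat_in. Qed.

Lemma relatorE (gT : finGroupType) (g : 'I_d -> gT) :
  relator n f s g =
  gat g 0 ^+ qval p f * comm_iter (gat g 0) (gat g 1) n * pair_comms g * pw_eval s g.
Proof. by []. Qed.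

Lemma relator_in (gT : finGroupType) (H : {group gT}) (g : 'I_d -> gT) :
  p.-group (gens g) -> (forall j, g j \in H) -> relator n f s g \in H.
Proof.
move=> pg gH; have gatH k := gat_in k gH.
rewrite relatorE !groupM ?groupX ?comm_iter_in ?pair_comms_in //.
exact: subsetP (gens_sub gH) _ (pw_in s pg).
Qed.

Lemma relator_morph (gT hT : finGroupType) (D : {group gT})
    (phi : {morphism D >-> hT}) (g : 'I_d -> gT) :
  p.-group (gens g) -> (forall j, g j \in D) ->
  relator n f s (fun j => phi (g j)) = phi (relator n f s g).
Proof.
move=> pg gD; have gatD k := gat_in k gD.
have gat_phi k : gat (fun j => phi (g j)) k = phi (gat g k).
  by rewrite /gat; case: insub; rewrite ?morph1.
rewrite !relatorE /pair_comms !gat_phi (pw_nat s phi pg gD) comm_iter_morph //.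
rewrite (eq_bigr (fun k : 'I__ => phi [~ gat g (2 * k + 2), gat g (2 * k + 3)]));
  last by move=> k _; rewrite !gat_phi morphR.
rewrite -morph_prod => [|k _]; last exact: groupR.
have sD : pw_eval s g \in D := subsetP (gens_sub gD) _ (pw_in s pg).
rewrite -morphX // -!morphM //.
all: by rewrite ?groupM ?groupX ?comm_iter_in -?/(pair_comms g) ?pair_comms_in.
Qed.

Hypothesis s_S2 : in_S2 s.

Lemma pw_eval_metabelian (gT : finGroupType) (H : {group gT}) (g : 'I_d -> gT) :
  p.-group H -> H^`(2) = 1 -> (forall j, g j \in H) -> pw_eval s g = 1.
Proof.
move=> pH H2 gH; apply/set1gP; rewrite -H2.
have sSH : gensS g \subset H by rewrite gen_subG; apply/subsetP => _ /imsetP[j _ ->].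
exact: subsetP (dergS 2 sSH) _ (s_S2 (pgroupS (gens_sub gH) pH)).
Qed.

Lemma relator_abelian (gT : finGroupType) (H : {group gT}) (g : 'I_d -> gT) :
  (1 <= n)%N -> abelian H -> p.-group H -> {in H, forall x, x ^+ qval p f = 1} ->
  (forall j, g j \in H) -> relator n f s g = 1.
Proof.
move=> n1 abH pH expH gH; have gatH k := gat_in k gH.
have commH x y : x \in H -> y \in H -> [~ x, y] = 1.
  by move=> Hx Hy; apply/eqP/commgP/(centsP abH).
rewrite relatorE /pair_comms big1 => [|k _]; last exact: commH.
have -> : comm_iter (gat g 0) (gat g 1) n = 1.
  by case: n n1 => // n' _; rewrite comm_iterS commH ?comm_iter_in.
have H2 : H^`(2) = 1 by rewrite dergSn (derG1P abH) comm1G.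
by rewrite expH // (pw_eval_metabelian pH H2 gH) !mulg1.
Qed.

Hypothesis p_pr : prime p.

Lemma hom_tuple_Fp (psi : 'I_d -> F) : (1 <= n)%N ->
  (match f with Some k => (1 <= k)%N | None => true end) ->
  hom_tuple n f s [set: F] psi.
Proof.
move=> n1 fk; split=> [j|]; first by rewrite inE.
apply: (relator_abelian (H := [set: F]%G)) => // [||x _|j]; last by rewrite inE.
- by apply/centsP => x _ y _; exact: addrC.
- by rewrite /pgroup cardsT card_Fp // pnat_id.
case: f fk => [[|k]|] //= _; have := expg_cardG (in_setT x).
by rewrite cardsT card_Fp // expnS expgM => ->; rewrite expg1n.
Qed.

Lemma comm_iter_Z4 (x y : GL4) m m' : y \in U4 p -> comm_iter x y m \in Z4 p ->
  (m < m')%N -> comm_iter x y m' = 1.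
Proof.
move=> Uy Zm; elim: m' => // m' IHm'; rewrite ltnS leq_eqVlt comm_iterS.
case/predU1P=> [<- | /IHm' ->]; last exact: comm1g.
by apply/eqP/commgP; exact: Z4_commute Zm Uy.
Qed.

Lemma comm_iter_U4 (x y : GL4) m : x \in U4 p -> y \in U4 p -> (3 <= m)%N ->
  comm_iter x y m = 1.
Proof.
move=> Ux Uy; apply: (comm_iter_Z4 (m := 2)) => //.
by rewrite comm_iterS -invgR groupV commg_V4_Z4 ?commg_U4_V4.
Qed.

Lemma comm_iter_V4 (x w : GL4) m : x \in U4 p -> w \in V4 p -> (2 <= m)%N ->
  comm_iter x w m = 1.
Proof.
move=> Ux Vw; apply: (comm_iter_Z4 (m := 1)); last exact: commg_V4_Z4.
exact: subsetP (V4_sub_U4 p) w Vw.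
Qed.

Lemma gens_U4_pgroup (g : 'I_d -> GL4) :
  (forall j, g j \in U4 p) -> p.-group (gens g).
Proof. by move=> gU; apply: pgroupS (gens_sub gU) (U4_pgroup p_pr). Qed.

Lemma relator_U4 (g : 'I_d -> GL4) : (forall j, g j \in U4 p) ->
  relator n f s g =
  gat g 0 ^+ qval p f * comm_iter (gat g 0) (gat g 1) n * pair_comms g.
Proof.
move=> gU; rewrite relatorE.
by rewrite (pw_eval_metabelian (U4_pgroup p_pr) (der2_U4 p) gU) mulg1.
Qed.

(** * Lifts to U_4 *)

Definition lifts (psi : 'I_3 -> 'I_d -> F) (g : 'I_d -> GL4) : Prop :=
  forall j, exists a13 a24 a14, g j = unip (psi i0 j) (psi i1 j) (psi i2 j) a13 a24 a14.

Lemma lifts_U4 psi (g : 'I_d -> GL4) : lifts psi g -> forall j, g j \in U4 p.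
Proof. by move=> lg j; have [a13 [a24 [a14 ->]]] := lg j; apply: unip_U4. Qed.

Lemma liftsE psi (g : 'I_d -> GL4) : lifts psi g <->
  (forall j, g j \in U4 p) /\ (forall j i, supd (GLval (g j)) i = psi i j).
Proof.
split=> [lg | [gU gsupd] j]; first split; [exact: lifts_U4 | move=> j i |].
  have [a13 [a24 [a14 ->]]] := lg j; rewrite supd_unip.
  by case: i => [[|[|[|i]]] ?] //=; congr psi; apply: val_inj.
case/U4P: (gU j) => a12 a23 a34 a13 a24 a14 gj; exists a13, a24, a14.
by rewrite gj -(gsupd j i0) -(gsupd j i1) -(gsupd j i2) gj !supd_unip.
Qed.

Lemma massey3_definedP psi :
  massey3_defined n f s psi <-> exists2 A, lifts psi A & relator n f s A \in Z4 p.
Proof.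
split=> [[rho [[rhoQ rel_rho] coset_lifts]] | [A lA ZA]].
  have [A HA] := fin_all_exists coset_lifts.
  have lA : lifts psi A by apply/liftsE; split=> j; case: (HA j).
  have AU := lifts_U4 lA; have AN j : A j \in 'N(Z4 p) := subsetP (U4_norm_Z4 p) _ (AU j).
  exists A => //.
  have rhoE : rho = fun j => coset_morphism (Z4 p) (A j).
    by apply: functional_extensionality => j; case: (HA j).
  have := relator_morph (coset_morphism (Z4 p)) (gens_U4_pgroup AU) AN.
  rewrite -rhoE rel_rho => /esym; apply: coset_idr.
  exact: subsetP (U4_norm_Z4 p) _ (relator_in (gens_U4_pgroup AU) AU).
have [AU Asupd] := (liftsE psi A).1 lA.
exists (fun j => coset (Z4 p) (A j)); split; last first.
  by move=> j; exists (A j); split; [exact: AU | | exact: Asupd].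
split=> [j|]; first exact: mem_quotient (AU j).
have AN j : A j \in 'N(Z4 p) := subsetP (U4_norm_Z4 p) _ (AU j).
rewrite (relator_morph (coset_morphism (Z4 p)) (gens_U4_pgroup AU) AN).
exact: coset_id.
Qed.

Lemma massey3_vanishesP psi :
  massey3_vanishes n f s psi <-> exists2 B, lifts psi B & relator n f s B = 1.
Proof.
split=> [[B [[BU relB] Bsupd]] | [B /liftsE[BU Bsupd] relB]].
  by exists B => //; apply/liftsE.
by exists B.
Qed.

Lemma qval_eq3 : (match f with Some k => (1 <= k)%N | None => true end) ->
  qval p f = 3 -> p = 3.
Proof.
case: f => [k|] //= k1 q3; have : (p %| p ^ k)%N by rewrite dvdn_exp.
by rewrite q3 dvdn_prime2 // => /eqP.
Qed.

Lemma U4_expq (x : GL4) : x \in U4 p ->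
  (match f with Some k => (1 <= k)%N | None => true end) ->
  (p = 2 -> match f with Some k => (2 <= k)%N | None => true end) ->
  qval p f <> 3 -> x ^+ qval p f = 1.
Proof.
move=> Ux; case: f => [k|] //= k1 k2 q3; apply: (U4_expn p_pr Ux).
have p2 := prime_gt1 p_pr; case: (ltnP 1 k) => [lt1k | lek1].
  have le_p2_pk : (p ^ 2 <= p ^ k)%N := leq_pexp2l (ltnW p2) lt1k.
  have le4_p2 : (4 <= p ^ 2)%N by rewrite expnS expn1 (leq_mul p2 p2).
  exact: leq_trans le4_p2 le_p2_pk.
have k_1 : k = 1%N by lia.
by rewrite k_1 expn1 in q3 k2 *; case: (p =P 2) => [/k2 //|]; lia.
Qed.

Definition upd (A : 'I_d -> GL4) (m : nat) (w : GL4) : 'I_d -> GL4 :=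
  fun j => if val j == m then A j * w else A j.

Lemma gat_upd (A : 'I_d -> GL4) m (w : GL4) k : (m < d)%N ->
  gat (upd A m w) k = if k == m then gat A k * w else gat A k.
Proof.
move=> lt_md; case: (ltnP k d) => [lt_kd | le_dk]; first by rewrite !(gat_lt _ lt_kd).
by rewrite !gat_out //; case: eqP => // km; move: lt_md; rewrite -km ltnNge le_dk.
Qed.

Lemma lifts_upd psi (A : 'I_d -> GL4) m (w : GL4) :
  lifts psi A -> w \in V4 p -> lifts psi (upd A m w).
Proof.
move=> lA /V4P[b13 [b24 [b14 ->]]] j; rewrite /upd; have [a13 [a24 [a14 ->]]] := lA j.
by case: eqP => _; rewrite ?unip_mul ?mulr0 ?addr0; do 3 eexists.
Qed.

Lemma pair_comms_upd (A : 'I_d -> GL4) m (w : GL4) (K : 'I_(d./2 - 1))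
    (z : GL4) :
  (forall j, A j \in U4 p) -> z \in Z4 p -> (m < d)%N ->
  (m = 2 * K + 2 \/ m = 2 * K + 3)%N ->
  [~ gat (upd A m w) (2 * K + 2), gat (upd A m w) (2 * K + 3)] =
    z * [~ gat A (2 * K + 2), gat A (2 * K + 3)] ->
  pair_comms (upd A m w) = z * pair_comms A.
Proof.
move=> AU Zz lt_md mK factorK.
rewrite /pair_comms -(prod_central_factor K); last first.
  by move=> k; apply: Z4_commute; rewrite // groupR ?gat_in.
apply: eq_bigr => k _; case: eqP => [-> // | kK].
have kK' : (k : nat) <> K by move=> E; apply: kK; apply: val_inj.
have [m_ne2 m_ne3] : (2 * k + 2 == m)%N = false /\ (2 * k + 3 == m)%N = false.
  by split; apply/negbTE/eqP; lia.
by rewrite !gat_upd // m_ne2 m_ne3.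
Qed.

Lemma pair_comms_adjust psi (A : 'I_d -> GL4) (j : 'I_d) (z : GL4) :
  ~~ odd d -> lifts psi A -> (2 <= j)%N ->
  (psi i0 j != 0%R) || (psi i2 j != 0%R) -> z \in Z4 p ->
  exists2 B, lifts psi B & pair_comms B = z * pair_comms A.
Proof.
move=> d_even lA j2 nz Zz; have AU := lifts_U4 lA.
have [lt_Kd lt_K3d jE] := pair_index d_even j2 (ltn_ord j).
have [K KE] : exists K : 'I_(d./2 - 1), K = (j./2 - 1)%N :> nat.
  by exists (Ordinal lt_Kd).
rewrite -KE in lt_K3d jE; have lt_K2d : (2 * K + 2 < d)%N by lia.
have [a13 [a24 [a14 Aj]]] := lA j.
have Aj_onto c : c \in Z4 p -> exists2 w, w \in V4 p & [~ A j, w] = c.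
  by rewrite Aj; apply: commg_onto_Z4.
have ne23 : (2 * K + 2 == 2 * K + 3)%N = false by rewrite eqn_add2l.
have ne32 : (2 * K + 3 == 2 * K + 2)%N = false by rewrite eqn_add2l.
case: (boolP (odd j)) jE => [_ | _] /= jE.
  have [w Vw Ajw] := Aj_onto z^-1 (groupVr Zz).
  exists (upd A (2 * K + 2) w); first exact: lifts_upd.
  apply: (pair_comms_upd AU Zz lt_K2d); first by left.
  rewrite !(gat_upd _ _ _ lt_K2d) eqxx ne32.
  by rewrite -jE gat_ord commgMV4l ?gat_in // -invgR Ajw invgK.
have [w Vw Ajw] := Aj_onto z Zz.
exists (upd A (2 * K + 3) w); first exact: lifts_upd.
apply: (pair_comms_upd AU Zz lt_K3d); first by right.
rewrite !(gat_upd _ _ _ lt_K3d) eqxx ne23.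
by rewrite -jE gat_ord commgMV4r ?gat_in // Ajw.
Qed.

Lemma pair_comms_Z4_trivial psi (A : 'I_d -> GL4) : ~~ odd d -> lifts psi A ->
  pair_comms A \in Z4 p -> exists2 B, lifts psi B & pair_comms B = 1.
Proof.
move=> d_even lA ZA.
pose active :=
  [pred j : 'I_d | (2 <= j)%N && ((psi i0 j != 0%R) || (psi i2 j != 0%R))].
case: (pickP active) => [j /andP[j2 nz] | inactive].
  have [B lB BE] := pair_comms_adjust d_even lA j2 nz (groupVr ZA).
  by exists B; rewrite // BE mulVg.
exists A => //; apply: big1 => k _; apply/eqP/commgP.
have shape m : (2 <= m)%N ->
    exists b23 b13 b24 b14, gat A m = unip 0 b23 0 b13 b24 b14.
  move=> m2; case: (ltnP m d) => [lt_md | le_dm]; last first.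
    by rewrite gat_out // -unip1; do 4 eexists.
  have /negbT := inactive (Ordinal lt_md).
  rewrite /= m2 negb_or !negbK => /andP[/eqP psi0 /eqP psi2].
  rewrite (gat_lt _ lt_md); have [a13 [a24 [a14 ->]]] := lA (Ordinal lt_md).
  by rewrite psi0 psi2; do 4 eexists.
have [b23 [b13 [b24 [b14 ->]]]] := shape (2 * k + 2)%N (leq_addl _ _).
have le2_3 : (2 <= 2 * k + 3)%N by lia.
have [c23 [c13 [c24 [c14 ->]]]] := shape (2 * k + 3)%N le2_3.
exact: unip_commute.
Qed.

Lemma massey3_vanishes_of_defined psi : ~~ odd d -> (3 <= n)%N ->
  (match f with Some k => (1 <= k)%N | None => true end) ->
  (p = 2 -> match f with Some k => (2 <= k)%N | None => true end) ->
  qval p f <> 3 -> massey3_defined n f s psi -> massey3_vanishes n f s psi.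
Proof.
move=> d_even n3 fk f2 q3 /massey3_definedP[A lA ZA].
have relE (g : 'I_d -> GL4) : lifts psi g -> relator n f s g = pair_comms g.
  move=> lg; have gU := lifts_U4 lg; have gatU k := gat_in k gU.
  by rewrite relator_U4 // U4_expq // comm_iter_U4 // !mul1g.
rewrite relE // in ZA; have [B lB relB] := pair_comms_Z4_trivial d_even lA ZA.
by apply/massey3_vanishesP; exists B; rewrite ?relE.
Qed.

Lemma lifts_gat_V4 psi (g : 'I_d -> GL4) m : lifts psi g ->
  (forall j : 'I_d, j = m :> nat -> forall i, psi i j = 0%R) -> gat g m \in V4 p.
Proof.
move=> lg psi0; case: (ltnP m d) => [lt_md | le_dm]; last by rewrite gat_out.
rewrite (gat_lt _ lt_md); have [a13 [a24 [a14 ->]]] := lg (Ordinal lt_md).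
by apply/V4P; rewrite !psi0 //; do 3 eexists.
Qed.

Lemma pair_comms_V4 (g : 'I_d -> GL4) :
  (forall m, (2 <= m)%N -> gat g m \in V4 p) -> pair_comms g = 1.
Proof.
move=> gV; apply: big1 => k _; apply/eqP/commgP.
by apply: (centsP (V4_abelian p)); apply: gV; lia.
Qed.

Lemma not_all_massey3_vanish psi : (1 <= n)%N ->
  (match f with Some k => (1 <= k)%N | None => true end) ->
  (forall g, lifts psi g -> relator n f s g = unip 0 0 0 0 0 1) ->
  ~ all_defined_massey3_vanish n f s.
Proof.
move=> n1 fk relE all_vanish.
pose g0 j : GL4 := unip (psi i0 j) (psi i1 j) (psi i2 j) 0 0 0.
have lg0 : lifts psi g0 by move=> j; do 3 eexists.
have defined : massey3_defined n f s psi.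
  by apply/massey3_definedP; exists g0; rewrite ?relE //; apply/Z4P; eexists.
have psi_hom i := hom_tuple_Fp (psi i) n1 fk.
have [B lB] := (massey3_vanishesP psi).1 (all_vanish psi psi_hom defined).
by rewrite relE // -unip1 => /unip_inj[_ _ _ _ [_ /eqP]]; rewrite oner_eq0.
Qed.

(* chi k is the dual basis element chi_(k+1) of H^1(G, F_p). *)
Definition chi (k : nat) (j : 'I_d) : F := (j == k :> nat)%:R%R.
Definition chi111 : 'I_3 -> 'I_d -> F := fun _ => chi 0.
Definition chi122 : 'I_3 -> 'I_d -> F := fun i => if i == i0 then chi 0 else chi 1.

Lemma relator_lift_chi111 (g : 'I_d -> GL4) :
  p = 3 -> qval p f = 3 -> (2 <= n)%N -> (0 < d)%N ->
  lifts chi111 g -> relator n f s g = unip 0 0 0 0 0 1.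
Proof.
move=> p3 q3 n2 d0 lg; have gU := lifts_U4 lg.
have gV m : m != 0%N -> gat g m \in V4 p.
  move=> m0; apply: (lifts_gat_V4 lg) => j jm i.
  by rewrite /chi111 /chi jm (negbTE m0).
rewrite relator_U4 // q3 comm_iter_V4 ?gV ?gat_in // pair_comms_V4 => [|m m2]; last first.
  by apply: gV; case: m m2.
rewrite (gat_lt _ d0); have [a13 [a24 [a14 ->]]] := lg (Ordinal d0).
by rewrite unip_exp3 // !mulg1 /chi111 /chi /= !mulr1.
Qed.

Lemma relator_lift_chi122 (g : 'I_d -> GL4) : n = 2 ->
  (match f with Some k => (1 <= k)%N | None => true end) ->
  (p = 2 -> match f with Some k => (2 <= k)%N | None => true end) ->
  qval p f <> 3 -> (1 < d)%N -> lifts chi122 g ->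
  relator n f s g = unip 0 0 0 0 0 1.
Proof.
move=> n2 fk f2 q3 d1 lg; have gU := lifts_U4 lg.
rewrite relator_U4 // U4_expq ?gat_in // pair_comms_V4 => [|m m2]; last first.
  apply: (lifts_gat_V4 lg) => j jm i; rewrite /chi122.
  by case: (i == i0); rewrite /chi jm; case: m m2 {jm} => [|[|m]].
rewrite n2 (gat_lt _ (ltnW d1)) (gat_lt _ d1) mul1g mulg1.
have [a13 [a24 [a14 ->]]] := lg (Ordinal (ltnW d1)).
have [b13 [b24 [b14 ->]]] := lg (Ordinal d1).
by rewrite /comm_iter /chi122 /chi /= !unip_comm; congr unip; ring.
Qed.

End Relator.

Theorem proposition5p7 (p d n : nat) (f : option nat) (s : ppword p d) :
  prime p -> (4 <= d)%N -> ~~ odd d -> (2 <= n)%N ->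
  (match f with Some k => (1 <= k)%N | None => true end) ->
  (p = 2 -> match f with Some k => (2 <= k)%N | None => true end) ->
  in_S2 s ->
  (all_defined_massey3_vanish n f s <-> (qval p f <> 3 /\ (3 <= n)%N)).
Proof.
move=> p_pr d4 d_even n2 fk f2 s_S2; split=> [all_vanish | [q3 n3] psi _]; last first.
  exact: massey3_vanishes_of_defined.
have n1 : (1 <= n)%N := ltnW n2.
have q3 : qval p f <> 3.
  move=> q3; apply: (not_all_massey3_vanish s_S2 p_pr n1 fk _ all_vanish) => g.
  by apply: relator_lift_chi111 => //; [exact: qval_eq3 fk q3 | lia].
split=> //; rewrite ltnNge; apply/negP => n_le2.
apply: (not_all_massey3_vanish s_S2 p_pr n1 fk _ all_vanish) => g.
by apply: relator_lift_chi122 => //; lia.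
Qed.
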